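(* Let $p\ge 30$ be a prime such that $-1$ is a quadratic residue modulo $p$ and $2$ and $3$ are quadratic non-residues modulo $p$. Then the path system $\mathcal{P}_p$ on the Paley graph $G_p$ is irreducible.
   Context: Let $R$ and $N$ denote the sets of nonzero quadratic residues and quadratic non-residues in $\mathbb{F}_p$. The Paley graph $G_p$ has vertex set $\mathbb{F}_p$, with $a,b$ adjacent iff $a-b\in R$. A path system $\mathcal{P}$ in a graph $G=(V,E)$ is a collection of simple paths such that for every pair of distinct vertices $u,v$ there is exactly one path $P_{u,v}\in\mathcal{P}$ connecting them. A partition $V=A\sqcup B$ with $A,B\neq\emptyset$ is a reduction of $\mathcal{P}$ if for all $u,v\in A$ all vertices of $P_{u,v}$ lie in $A$, and for all $u,v\in B$ all vertices of $P_{u,v}$ lie in $B$; $\mathcal{P}$ is irreducible if it has no reduction. The path system $\mathcal{P}_p$ is defined for $a\neq b\in\mathbb{F}_p$ by: if $b-a\in R$, then $P_{a,b}=(a,b)$; if $b-a=3$, then $P_{a,b}=(a,a+1,a+2,b)$ (and $P_{b,a}$ is the same path); if $b-a\in N$ and $b-a\neq\pm3$, then $P_{a,b}=(a,\tfrac{a+b}{2},b)$. *)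

From HB Require Import structures.
From mathcomp Require Import all_boot all_order all_algebra.
Set Implicit Arguments. Unset Strict Implicit. Unset Printing Implicit Defensive.
Import Order.TTheory GRing.Theory Num.Theory.
Local Open Scope ring_scope.

Definition is_qr (p : nat) (x : 'F_p) : bool :=
  (x != 0) && [exists y : 'F_p, y ^+ 2 == x].

Definition is_qnr (p : nat) (x : 'F_p) : bool :=
  (x != 0) && ~~ [exists y : 'F_p, y ^+ 2 == x].

(* Vertex sequence of the path P_{a,b} of the path system P_p (for a <> b). *)
Definition paley_path (p : nat) (a b : 'F_p) : seq 'F_p :=
  if is_qr (b - a) then [:: a; b]
  else if b - a == 3%:R then [:: a; a + 1; a + 2%:R; b]
  else if a - b == 3%:R then [:: b; b + 1; b + 2%:R; a]
  else [:: a; (a + b) / 2%:R; b].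

Definition paley_reduction (p : nat) (A : {set 'F_p}) : Prop :=
  [/\ A != set0, ~: A != set0,
      (forall u v : 'F_p, u \in A -> v \in A -> u != v ->
         forall w, w \in paley_path u v -> w \in A)
    & (forall u v : 'F_p, u \notin A -> v \notin A -> u != v ->
         forall w, w \in paley_path u v -> w \notin A)].

Definition paley_irreducible (p : nat) : Prop :=
  forall A : {set 'F_p}, ~ paley_reduction A.

From HB Require Import structures.
From mathcomp Require Import all_boot all_order all_algebra finfield ring zify.
Set Implicit Arguments. Unset Strict Implicit. Unset Printing Implicit Defensive.
Import GRing.Theory.

(* Let A be a reduction.  A and its complement are nonempty, and F_p is
   generated by 1, so some boundary point x has x in A and x + 1 not in A, or
   conversely.  Two closure rules of a reduction drive the argument:
   - three rule: since 3 is a non-residue, if u, u + 3 lie on the same side,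
     so do u + 1 and u + 2 (the path P_{u,u+3} goes through them);
   - midpoint rule: if v - u is a non-residue other than +-3 and u, v lie on
     the same side, so does (u + v) / 2.
   Writing x + k for the points of the line through x, we show by induction
   on m that x - t is on the side of x and x + 1 + t on the other side for
   every t <= m, as long as 2m + 1 <= p.  The base case m = 5 uses the
   differences 2 and 8; the induction step uses an even difference
   d in [m + 2, 2m + 2] of the form 2r^2 or 3r^2, a non-residue.  Since -1 is
   a square, p = 4q + 1, and m = 2q yields x - 2q = x + 1 + 2q on both sides
   at once, a contradiction. *)

Lemma eq_bool_by_contra (a b : bool) : (a = ~~ b -> False) -> a = b.
Proof. by case: a; case: b => // /(_ erefl). Qed.

Lemma window_pow4 (n : nat) : (8 <= n)%N -> exists k, (8 * 4 ^ k <= n < 32 * 4 ^ k)%N.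
Proof.
elim: n => [//|n IH]; rewrite leq_eqVlt => /orP [/eqP <- | /IH [k hk]].
  by exists 0%N.
have [lt_n | ge_n] := ltnP n.+1 (32 * 4 ^ k).
  by exists k; lia.
by exists k.+1; rewrite expnS; lia.
Qed.

(* For m >= 5 the window [m + 2, 2m + 2] contains a number c * r^2 with
   c in {2, 3} which is 18 or a multiple of 4 (namely 12, 18 or 32 times 4^k). *)
Lemma even_square_multiple (m : nat) : (5 <= m)%N -> exists c r,
  [/\ c = 2%N \/ c = 3%N, (0 < r)%N, (m + 2 <= c * r ^ 2 <= 2 * m + 2)%N
    & c * r ^ 2 = 18%N \/ (4 %| c * r ^ 2)%N].
Proof.
move=> m5; have [k] := @window_pow4 (m + 3) ltac:(lia).
have -> : (4 ^ k = 2 ^ k * 2 ^ k)%N by rewrite -expnMn.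
have s_gt0 : (0 < 2 ^ k)%N by rewrite expn_gt0.
set s := (2 ^ k)%N => hk.
have [le12 | gt12] := leqP (m + 2) (12 * (s * s)).
  by exists 3%N, (2 * s)%N; split; lia.
have [le18 | gt18] := leqP (m + 2) (18 * (s * s)).
  exists 2%N, (3 * s)%N; split; try lia.
  have [k0 | k_gt0] := posnP k; first by left; rewrite /s k0.
  have two_s : (2 %| s)%N by rewrite dvdn_exp.
  right; rewrite (_ : 2 * (3 * s) ^ 2 = 18 * (s * s))%N; last by ring.
  by rewrite dvdn_mull // (dvdn_mul two_s two_s).
by exists 2%N, (4 * s)%N; split; lia.
Qed.

Local Open Scope ring_scope.

Lemma is_qr_qnr (p : nat) (x : 'F_p) : is_qnr x -> is_qr x = false.
Proof. by case/andP => _; rewrite /is_qr => /negbTE ->; rewrite andbF. Qed.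

Lemma qnr_neq0 (p : nat) (x : 'F_p) : is_qnr x -> x != 0.
Proof. by case/andP. Qed.

Lemma qnr_mul_sq (p : nat) (a s : 'F_p) : is_qnr a -> s != 0 -> is_qnr (a * s ^+ 2).
Proof.
case/andP=> a0 a_nsq s0; have s20 : s ^+ 2 != 0 by rewrite expf_neq0.
rewrite /is_qnr mulf_neq0 //=; apply: contra a_nsq => /existsP [y /eqP y2].
by apply/existsP; exists (y / s); rewrite expr_div_n y2 mulfK.
Qed.

Section PrimeField.
Variable p : nat.
Hypothesis hp : prime p.

Lemma natF_neq0 (n : nat) : (0 < n < p)%N -> (n%:R : 'F_p) != 0.
Proof.
case/andP=> n_gt0 n_lt_p; rewrite -(dvdn_pcharf (pchar_Fp hp)).
by apply: contraL n_lt_p => /(dvdn_leq n_gt0); rewrite leqNgt.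
Qed.

Lemma natF_eq (m n : nat) : ((m%:R : 'F_p) == n%:R) = (m == n %[mod p]).
Proof. by rewrite -(inj_eq val_inj) /= !val_Fp_nat. Qed.

(* If -1 is a square mod an odd prime p, then p = 1 mod 4: otherwise
   p = 4k + 3 and Fermat's i^p = i gives i = (i^2)^(2k+1) i = -i. *)
Lemma sqrt_m1_mod4 : (2 < p)%N -> [exists i : 'F_p, i ^+ 2 == -1] -> (p %% 4 = 1)%N.
Proof.
move=> p_gt2 /existsP [i /eqP i2].
have odd_p : odd p by apply: contraLR p_gt2 => /(prime_oddPn hp) ->.
have i_fix : i ^+ p = i by rewrite -{2}(expf_card i) card_Fp.
have p_eq := divn_eq p 4; set k := (p %/ 4)%N in p_eq.
have [//|mod3] : (p %% 4 = 1 \/ p %% 4 = 3)%N by lia.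
have p_odd_mul : (p = (2 * (2 * k).+1).+1)%N by lia.
have : i + i = 0.
  have i_pow : i ^+ (2 * (2 * k).+1).+1 = i by rewrite -p_odd_mul.
  rewrite -{1}i_pow exprS exprM i2 -signr_odd /= oddM /= expr1.
  by rewrite mulrN1 addNr.
move/eqP; rewrite -mulr2n -mulr_natl mulf_eq0 => /orP [].
- by rewrite (negbTE (natF_neq0 (n := 2) _)) //; lia.
- move=> /eqP i0; move: i2; rewrite i0 expr0n /= => /eqP.
  by rewrite eq_sym oppr_eq0 oner_eq0.
Qed.

Lemma proper_subset_boundary (A : {set 'F_p}) : A != set0 -> ~: A != set0 ->
  exists x : 'F_p, (x + 1 \in A) = (x \notin A).
Proof.
move=> /set0Pn [a aA] /set0Pn [b]; rewrite inE => bA.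
have [x /eqP bd | no_bd] := pickP (fun x : 'F_p => (x + 1 \in A) == (x \notin A)).
  by exists x.
have shift (y : 'F_p) : (y + 1 \in A) = (y \in A).
  by move: (no_bd y) => /=; case: (y + 1 \in A); case: (y \in A).
have nat_side (n : nat) : (n%:R \in A) = ((0 : 'F_p) \in A).
  by elim: n => // n IH; rewrite -natr1 shift.
have all_side (w : 'F_p) : (w \in A) = ((0 : 'F_p) \in A).
  have -> : w = (val w)%:R.
    apply: val_inj; rewrite /= val_Fp_nat // modn_small //.
    by apply: leq_trans (ltn_ord w) _; rewrite Fp_cast.
  exact: nat_side.
by move: bA; rewrite all_side -(all_side a) aA.
Qed.

End PrimeField.

Definition midpoint_diff (p : nat) (d : 'F_p) : bool :=
  [&& is_qnr d, d != 3%:R & - d != 3%:R].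

Section Reduction.
Variables (p : nat) (A : {set 'F_p}).
Hypothesis hred : paley_reduction A.

Lemma path_same_side (u v w : 'F_p) : (v \in A) = (u \in A) -> u != v ->
  w \in paley_path u v -> (w \in A) = (u \in A).
Proof.
case: hred => _ _ closedA closedAc vu uv w_uv.
have [uA | uAc] := boolP (u \in A).
  by apply: (closedA u v) => //; rewrite vu.
by apply/negbTE; apply: (closedAc u v) => //; rewrite vu.
Qed.

Hypothesis h3 : is_qnr (3%:R : 'F_p).

Lemma three_rule (u : 'F_p) : (u + 3%:R \in A) = (u \in A) ->
  (u + 1 \in A) = (u \in A) /\ (u + 2%:R \in A) = (u \in A).
Proof.
move=> same; have diff3 : u + 3%:R - u = 3%:R by rewrite addrAC subrr add0r.
have u_neq : u != u + 3%:R by rewrite eq_sym -subr_eq0 diff3 (qnr_neq0 h3).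
have path3 : paley_path u (u + 3%:R) = [:: u; u + 1; u + 2%:R; u + 3%:R].
  by rewrite /paley_path diff3 (is_qr_qnr h3) eqxx.
by split; apply: (path_same_side same u_neq); rewrite path3 !inE eqxx ?orbT.
Qed.

Hypothesis h2 : is_qnr (2%:R : 'F_p).

Lemma midpoint_rule (u v w : 'F_p) : midpoint_diff (v - u) -> u + v = w + w ->
  (v \in A) = (u \in A) -> (w \in A) = (u \in A).
Proof.
case/and3P=> qnr_d d_neq3 md_neq3 uvw same.
have u_neq : u != v by rewrite eq_sym -subr_eq0 (qnr_neq0 qnr_d).
have mid : (u + v) / 2%:R = w.
  by rewrite uvw -mulr2n -[w *+ 2]mulr_natr mulfK // (qnr_neq0 h2).
have path_mid : paley_path u v = [:: u; w; v].
  by rewrite /paley_path (is_qr_qnr qnr_d) (negbTE d_neq3) -opprB (negbTE md_neq3) mid.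
by apply: (path_same_side same u_neq); rewrite path_mid !inE eqxx orbT.
Qed.

End Reduction.

Section Differences.
Variable p : nat.
Hypotheses (hp : prime p) (h30 : (30 <= p)%N) (h2 : is_qnr (2%:R : 'F_p)).

Lemma midpoint_diff_nat (d : nat) : is_qnr (d%:R : 'F_p) -> d != 3 %[mod p] ->
  ~~ (p %| d + 3)%N -> midpoint_diff (d%:R : 'F_p).
Proof.
move=> qnr_d d_neq3 dvd_d3; rewrite /midpoint_diff qnr_d natF_eq // d_neq3 /=.
apply: contra dvd_d3 => /eqP d3.
by rewrite (dvdn_pcharf (pchar_Fp hp)) natrD -d3 subrr.
Qed.

Lemma midpoint_diff2 : midpoint_diff (2%:R : 'F_p).
Proof.
apply: midpoint_diff_nat => //; first by rewrite !modn_small //; lia.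
by apply/negP => /dvdn_leq; lia.
Qed.

Lemma midpoint_diff8 : midpoint_diff (8%:R : 'F_p).
Proof.
apply: midpoint_diff_nat; last by apply/negP => /dvdn_leq; lia.
  rewrite (_ : 8 = 2 * 2 ^ 2)%N // natrM natrX.
  by apply: qnr_mul_sq => //; apply: natF_neq0; lia.
by rewrite !modn_small //; lia.
Qed.

(* For 5 <= m with 2m + 3 <= p there is an even midpoint difference
   d = a + m + 2 in [m + 2, 2m + 2]; m = a + 2s places the midpoint of
   x - (m + 1) and x + 1 + a at x - s. *)
Lemma midpoint_window (hp4 : (p %% 4 = 1)%N) (h3 : is_qnr (3%:R : 'F_p)) (m : nat) :
  (5 <= m)%N -> (2 * m + 3 <= p)%N ->
  exists a s : nat, m = (a + 2 * s)%N /\ midpoint_diff ((a + m + 2)%:R : 'F_p).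
Proof.
move=> m5 mp; have [c [r [c23 r_gt0 win shape]]] := even_square_multiple m5.
set d := (c * r ^ 2)%N in win shape.
have [h d_eq] : exists h, d = (2 * h)%N.
  by case: shape => [-> | /dvdnP [j ->]]; [exists 9%N | exists (2 * j)%N; lia].
exists (d - m - 2)%N, (m + 1 - h)%N; split; first lia.
rewrite (_ : d - m - 2 + m + 2 = d)%N; last lia.
have r_le_d : (r <= d)%N.
  rewrite /d -mulnn; apply: leq_trans (leq_pmull _ _) => //; first exact: leq_pmulr.
  by case: c23 => ->.
apply: midpoint_diff_nat.
- rewrite /d natrM natrX; apply: qnr_mul_sq; first by case: c23 => ->.
  by apply: natF_neq0; lia.
- by rewrite !modn_small //; lia.
- apply/negP => /dvdnP [[|[|j]] dj]; rewrite ?mul0n ?mul1n ?mulSn in dj; lia.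
Qed.

End Differences.

Definition side (p : nat) (A : {set 'F_p}) (x : 'F_p) (k : int) : bool :=
  x + k%:~R \in A.

Lemma side_period (p : nat) (A : {set 'F_p}) (x : 'F_p) (k : int) :
  prime p -> side A x (k + p%:Z) = side A x k.
Proof.
move=> hp; have p0 : (p%:Z)%:~R = 0 :> 'F_p := pchar_Fp_0 hp.
by rewrite /side intrD p0 addr0.
Qed.

Section Boundary.
Variables (p : nat) (A : {set 'F_p}) (x : 'F_p).
Hypotheses (hp : prime p) (h30 : (30 <= p)%N) (hp4 : (p %% 4 = 1)%N).
Hypotheses (h2 : is_qnr (2%:R : 'F_p)) (h3 : is_qnr (3%:R : 'F_p)).
Hypothesis hred : paley_reduction A.
Local Notation col := (side A x).

Lemma side_three (k : int) : col (k + 3) = col k ->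
  col (k + 1) = col k /\ col (k + 2) = col k.
Proof.
have shift (j : int) : x + (k + j)%:~R = x + k%:~R + j%:~R by rewrite intrD addrA.
by rewrite /side !shift; exact: three_rule.
Qed.

Lemma side_midpoint (k l c : int) (d : nat) : l - k = d%:Z -> k + l = c + c ->
  midpoint_diff (d%:R : 'F_p) -> col l = col k -> col c = col k.
Proof.
move=> ldk klc dmid; rewrite /side; apply: (midpoint_rule hred h2).
- by rewrite opprD addrACA subrr add0r -intrB ldk.
- by rewrite addrACA -intrD klc intrD addrACA.
Qed.

Hypothesis boundary : col 1 = ~~ col 0.

Definition separated (m : nat) : Prop :=
  forall t : nat, (t <= m)%N -> col (- t%:Z) = col 0 /\ col (t%:Z + 1) = ~~ col 0.

Lemma separated_base : separated 5.
Proof.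
have diff2 := midpoint_diff2 hp h30 h2.
have diff8 := midpoint_diff8 hp h30 h2.
have m2 : col (-2) = col 0.
  apply: eq_bool_by_contra => E.
  have c0 : col 0 = col (-2) := (side_three (k := -2) (etrans boundary (esym E))).2.
  by move: c0; rewrite E; case: (col 0).
have p3 : col 3 = ~~ col 0.
  apply: eq_bool_by_contra; rewrite negbK => E.
  have c1 : col 1 = col 0 := (side_three (k := 0) E).1.
  by move: c1; rewrite boundary; case: (col 0).
have m1 : col (-1) = col 0.
  by rewrite (side_midpoint (k := -2) (l := 0) (c := -1) erefl erefl diff2 (esym m2)).
have p2 : col 2 = ~~ col 0.
  have := side_midpoint (k := 1) (l := 3) (c := 2) erefl erefl diff2
    (etrans p3 (esym boundary)).
  by rewrite boundary.
have m5 : col (-5) = col 0.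
  apply: eq_bool_by_contra => E.
  have := side_midpoint (k := -5) (l := 3) (c := -1) erefl erefl diff8 (etrans p3 (esym E)).
  by rewrite m1 E; case: (col 0).
have [m4 m3] : col (-4) = col 0 /\ col (-3) = col 0.
  by rewrite -m5; exact: (side_three (k := -5) (etrans m2 (esym m5))).
have p6 : col 6 = ~~ col 0.
  apply: eq_bool_by_contra; rewrite negbK => E.
  have := side_midpoint (k := -2) (l := 6) (c := 2) erefl erefl diff8 (etrans E (esym m2)).
  by rewrite p2 m2; case: (col 0).
have [p4 p5] : col 4 = ~~ col 0 /\ col 5 = ~~ col 0.
  by rewrite -p3; exact: (side_three (k := 3) (etrans p6 (esym p3))).
by case=> [|[|[|[|[|[|//]]]]]] _; split.
Qed.

(* Extending the separation by one: the midpoint of x - (m + 1) and x + 1 + a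
   is x - s, on the side of x, and that of x - a and x + 1 + (m + 1) is
   x + 1 + s, on the other side. *)
Lemma separated_step (m : nat) : (5 <= m)%N -> (2 * m + 3 <= p)%N ->
  separated m -> separated m.+1.
Proof.
move=> m5 mp sep t; rewrite leq_eqVlt ltnS => /orP [/eqP -> | /sep //].
have [a [s [m_eq dmid]]] := midpoint_window hp h30 h2 hp4 h3 m5 mp.
have s_le : (s <= m)%N by clear -m_eq; lia.
have a_le : (a <= m)%N by clear -m_eq; lia.
have [sep_s sep_s1] := sep s s_le.
have [sep_a sep_a1] := sep a a_le.
have diff_left : a%:Z + 1 - - (m.+1)%:Z = (a + m + 2)%N by clear -m_eq; lia.
have sum_left : - (m.+1)%:Z + (a%:Z + 1) = - s%:Z + - s%:Z by clear -m_eq; lia.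
have diff_right : (m.+1)%:Z + 1 - - a%:Z = (a + m + 2)%N by clear -m_eq; lia.
have sum_right : - a%:Z + ((m.+1)%:Z + 1) = (s%:Z + 1) + (s%:Z + 1) by clear -m_eq; lia.
split.
- apply: eq_bool_by_contra => E.
  have := side_midpoint diff_left sum_left dmid (etrans sep_a1 (esym E)).
  by rewrite sep_s E; case: (col 0).
- apply: eq_bool_by_contra; rewrite negbK => E.
  have := side_midpoint diff_right sum_right dmid (etrans E (esym sep_a)).
  by rewrite sep_s1 sep_a; case: (col 0).
Qed.

Lemma separated_upto (m : nat) : (5 <= m)%N -> (2 * m + 1 <= p)%N -> separated m.
Proof.
elim: m => [//|m IH]; rewrite leq_eqVlt => /orP [/eqP <- _ | m5 mp].
  exact: separated_base.
by apply: separated_step; [lia | lia | apply: IH; lia].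
Qed.

(* With p = 4q + 1, the points x - 2q and x + 1 + 2q coincide. *)
Lemma boundary_absurd : False.
Proof.
have [q p_eq] : exists q, p = (4 * q + 1)%N by exists (p %/ 4)%N; lia.
have [sep_left sep_right] := separated_upto (m := (2 * q)%N) ltac:(lia) ltac:(lia) (leqnn _).
have wrap : (2 * q)%:Z + 1 = - (2 * q)%:Z + p%:Z by lia.
by move: sep_right; rewrite wrap side_period // sep_left; case: (col 0).
Qed.

End Boundary.

Theorem proposition2p1 (p : nat) (hp : prime p) (h30 : (30 <= p)%N)
  (hm1 : is_qr (- 1 : 'F_p)) (h2 : is_qnr (2%:R : 'F_p))
  (h3 : is_qnr (3%:R : 'F_p)) :
  paley_irreducible p.
Proof.
move=> A hred.
have hp4 : (p %% 4 = 1)%N by apply: sqrt_m1_mod4 => //; [lia | case/andP: hm1].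
have [A0 Ac0 _ _] := hred.
have [x x_bd] := proper_subset_boundary hp A0 Ac0.
have boundary : side A x 1 = ~~ side A x 0 by rewrite /side mulr0z addr0.
exact: (boundary_absurd hp h30 hp4 h2 h3 hred boundary).
Qed.
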